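(* Let $\mathrm{k}$ be an infinite field and $\mathcal{A}$ a unital associative $\mathrm{k}$-algebra satisfying $\mathbf{H}_{\mathrm{s}}$. Let $V,W$ be finite-dimensional $\mathrm{k}$-subspaces of $\mathcal{A}$ such that the elements of $V$ pairwise commute, $V\cap U(\mathcal{A})\neq\emptyset$ and $W\cap U(\mathcal{A})\neq\emptyset$. Then there exist a $\mathrm{k}$-subspace $S$ of $\mathrm{k}\langle VW\rangle$ and a finite-dimensional subalgebra $\mathcal{H}$ of $\mathcal{A}$ such that $S\cap U(\mathcal{A})\neq\emptyset$, $\mathrm{k}\subseteq\mathcal{H}\subseteq\mathcal{A}$, $\dim_{\mathrm{k}}\mathrm{k}\langle VW\rangle\geq\dim_{\mathrm{k}}S\geq\dim_{\mathrm{k}}V+\dim_{\mathrm{k}}W-\dim_{\mathrm{k}}\mathcal{H}$, and $\mathcal{H}S=S$.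
   Context: Algebras are unital associative, subalgebras contain $1$; $U(\mathcal{A})$ is the group of invertible elements; $\mathrm{k}\langle S\rangle$ is linear span; $VW=\{vw\mid v\in V,w\in W\}$. Hypothesis $\mathbf{H}_{\mathrm{s}}$: $\mathcal{A}$ is finite-dimensional over $\mathrm{k}$, or $\mathrm{k}\in\{\mathbb{R},\mathbb{C}\}$ and $\mathcal{A}$ is a Banach algebra over $\mathrm{k}$, or $\mathcal{A}$ is a finite product of field extensions of $\mathrm{k}$. No hypothesis on the number of subalgebras is made. *)

From HB Require Import structures.
From mathcomp Require Import all_boot all_order all_algebra.
From mathcomp Require Import reals.
From mathcomp Require Import complex.
Set Implicit Arguments. Unset Strict Implicit. Unset Printing Implicit Defensive.
Import Order.TTheory GRing.Theory Num.Theory.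
Local Open Scope ring_scope.

Section LinAlg.
Variables (k : fieldType) (A : lmodType k).

Definition kspan (s : seq A) (x : A) : Prop :=
  exists c : 'I_(size s) -> k, x = \sum_(i < size s) c i *: s`_i.

Definition lin_indep (s : seq A) : Prop :=
  forall c : 'I_(size s) -> k,
    \sum_(i < size s) c i *: s`_i = 0 -> forall i, c i = 0.

Definition is_basis (P : A -> Prop) (b : seq A) : Prop :=
  lin_indep b /\ forall x, P x <-> kspan b x.

Definition has_dim (P : A -> Prop) (d : nat) : Prop :=
  exists b, is_basis P b /\ size b = d.

Definition fin_dim : Prop := exists s : seq A, forall x, kspan s x.
End LinAlg.

Definition infinite_type (T : eqType) : Prop := forall s : seq T, exists x, x \notin s.

Definition setmul (A : pzRingType) (P Q : A -> Prop) (x : A) : Prop :=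
  exists v w, [/\ P v, Q w & x = v * w].

(* spanning family of the products of two spanning families *)
Definition prodseq (A : pzRingType) (s t : seq A) : seq A :=
  [seq x * y | x <- s, y <- t].

Section Hs.
Variables (k : fieldType) (A : unitAlgType k).

(* Banach algebra over the reals: k is (isomorphic as a field to) the reals R *)
Definition banach_norm (R : realType) (absk : k -> R) (N : A -> R) : Prop :=
  (forall x, 0 <= N x) /\
  (forall x, N x = 0 -> x = 0) /\
  (forall x y, N (x + y) <= N x + N y) /\
  (forall (c : k) x, N (c *: x) = absk c * N x) /\
  (forall x y, N (x * y) <= N x * N y) /\
  (forall u : nat -> A,
     (forall e : R, 0 < e -> exists n0, forall m n, (n0 <= m)%N -> (n0 <= n)%N ->
         N (u m - u n) < e) ->
     exists l, forall e : R, 0 < e -> exists n0, forall n, (n0 <= n)%N -> N (u n - l) < e).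

Definition real_banach : Prop :=
  exists (R : realType) (iota : {rmorphism k -> R}),
    bijective iota /\ exists N : A -> R, banach_norm (fun c => `|iota c|) N.

Definition complex_banach : Prop :=
  exists (R : realType) (iota : {rmorphism k -> R[i]}),
    bijective iota /\ exists N : A -> R,
      banach_norm (fun c => let: Complex a b := iota c in Num.sqrt (a ^+ 2 + b ^+ 2)) N.

(* A is isomorphic as a k-algebra to a finite product of field extensions of k *)
Definition prod_field_ext : Prop :=
  exists (n : nat) (F : 'I_n -> fieldType)
         (emb : forall i, {rmorphism k -> F i})
         (phi : forall i, {rmorphism A -> F i}),
    [/\ forall i (c : k) (x : A), phi i (c *: x) = emb i c * phi i x,
        forall x y : A, (forall i, phi i x = phi i y) -> x = y &
        forall g : forall i, F i, exists x : A, forall i, phi i x = g i].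

Definition H_s : Prop :=
  fin_dim A \/ real_banach \/ complex_banach \/ prod_field_ext.
End Hs.

(* Translating V and W by units of A we may assume 1 \in V and 1 \in W.  If
   VW is contained in W, take S = W and for H the left stabiliser
   {a | aW <= W}, which contains V.  Otherwise pick x \in V and X \in W with
   xX \notin W and replace (V, W) by (V', W') := ({z \in V | zX \in W}, W + VX):
   V' is a proper subspace of V containing 1, dim V' + dim W' >= dim V + dim W,
   and V'W' <= VW because z (p + qX) = zp + q (zX) for commuting z, q \in V.
   Induction on dim V concludes. *)

From HB Require Import structures.
From mathcomp Require Import all_boot all_order all_algebra.
From Stdlib Require Import Classical.
Set Implicit Arguments. Unset Strict Implicit. Unset Printing Implicit Defensive.
Import GRing.Theory.
Local Open Scope ring_scope.

Section Span.
Variables (k : fieldType) (U : lmodType k).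
Implicit Types (s t : seq U) (x y z : U).

Definition subspace (P : U -> Prop) :=
  [/\ P 0, forall x y, P x -> P y -> P (x + y) & forall c x, P x -> P (c *: x)].

Lemma kspan0 s : kspan s 0.
Proof. by exists (fun=> 0); rewrite big1 // => i _; rewrite scale0r. Qed.

Lemma kspanD s x y : kspan s x -> kspan s y -> kspan s (x + y).
Proof.
case=> c -> [d ->]; exists (fun i => c i + d i).
by rewrite -big_split; apply: eq_bigr => i _; rewrite scalerDl.
Qed.

Lemma kspanZ s c x : kspan s x -> kspan s (c *: x).
Proof.
case=> d ->; exists (fun i => c * d i).
by rewrite scaler_sumr; apply: eq_bigr => i _; rewrite scalerA.
Qed.

Lemma kspanN s x : kspan s x -> kspan s (- x).
Proof. by rewrite -scaleN1r; apply: kspanZ. Qed.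

Lemma kspan_subspace s : subspace (kspan s).
Proof. by split; [apply: kspan0 | apply: kspanD | apply: kspanZ]. Qed.

Lemma subspaceI (P Q : U -> Prop) :
  subspace P -> subspace Q -> subspace (fun x => P x /\ Q x).
Proof.
case=> P0 PD PZ [Q0 QD QZ]; split=> // [x y [? ?] [? ?]|c x [? ?]].
  by split; [apply: PD | apply: QD].
by split; [apply: PZ | apply: QZ].
Qed.

Lemma kspan_nil x : kspan [::] x <-> x = 0.
Proof. by split=> [[c ->]|->]; [rewrite big_ord0 | apply: kspan0]. Qed.

Lemma kspan_cons a s x :
  kspan (a :: s) x <-> exists c y, kspan s y /\ x = c *: a + y.
Proof.
split=> [[c ->]|[c [y [[d ->] ->]]]].
  rewrite /= big_ord_recl; exists (c ord0), (\sum_(i < size s) c (lift ord0 i) *: s`_i).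
  by split=> //; exists (fun i => c (lift ord0 i)).
exists (fun i => if unlift ord0 i is Some j then d j else c).
rewrite /= big_ord_recl unlift_none; congr (_ + _).
by apply: eq_bigr => i _; rewrite liftK.
Qed.

Lemma kspan_minimal (P : U -> Prop) s : subspace P ->
  (forall x, x \in s -> P x) -> forall x, kspan s x -> P x.
Proof.
move=> [P0 PD PZ]; elim: s => [_ x /kspan_nil -> //|a s IH Ps x].
case/kspan_cons=> c [y [hy ->]]; apply: PD; first by apply/PZ/Ps/mem_head.
by apply: IH hy => z hz; apply: Ps; rewrite in_cons hz orbT.
Qed.

Lemma kspan_mem s x : x \in s -> kspan s x.
Proof.
elim: s => [//|a s IH]; rewrite in_cons => /orP[/eqP->|/IH hx]; apply/kspan_cons.
  by exists 1, 0; rewrite scale1r addr0; split=> //; apply: kspan0.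
by exists 0, x; rewrite scale0r add0r.
Qed.

Lemma kspan_subset s t : {subset s <= t} -> forall x, kspan s x -> kspan t x.
Proof. by move=> st; apply: kspan_minimal (kspan_subspace t) _ => x /st/kspan_mem. Qed.

Lemma kspan_cat s t x :
  kspan (s ++ t) x <-> exists y z, [/\ kspan s y, kspan t z & x = y + z].
Proof.
split=> [|[y [z [hy hz ->]]]]; last first.
  by apply: kspanD; [apply: kspan_subset hy | apply: kspan_subset hz] => a;
    rewrite mem_cat => ->; rewrite ?orbT.
pose P x := exists y z, [/\ kspan s y, kspan t z & x = y + z].
apply: (@kspan_minimal P) x => [|x]; last first.
  rewrite mem_cat => /orP[/kspan_mem hx|/kspan_mem hx]; [exists x, 0 | exists 0, x].
    by rewrite addr0; split=> //; apply: kspan0.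
  by rewrite add0r; split=> //; apply: kspan0.
split; first by exists 0, 0; rewrite addr0; split=> //; apply: kspan0.
  move=> _ _ [y1 [z1 [hy1 hz1 ->]]] [y2 [z2 [hy2 hz2 ->]]].
  by exists (y1 + y2), (z1 + z2); rewrite addrACA; split=> //; apply: kspanD.
move=> c _ [y [z [hy hz ->]]]; exists (c *: y), (c *: z).
by rewrite scalerDr; split=> //; apply: kspanZ.
Qed.

Lemma lin_indep_cons a s : lin_indep (a :: s) <-> lin_indep s /\ ~ kspan s a.
Proof.
pose ext (c0 : k) (d : 'I_(size s) -> k) (i : 'I_(size s).+1) :=
  if unlift ord0 i is Some j then d j else c0.
have sum_ext c0 d : \sum_(i < size (a :: s)) ext c0 d i *: (a :: s)`_i
                    = c0 *: a + \sum_(i < size s) d i *: s`_i.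
  rewrite /= big_ord_recl /ext unlift_none; congr (_ + _).
  by apply: eq_bigr => i _; rewrite liftK.
split=> [ind|[ind_s a_out] c].
  split=> [d hd j|[d hd]].
    have := ind (ext 0 d); rewrite sum_ext scale0r add0r hd => /(_ erefl (lift ord0 j)).
    by rewrite /ext liftK.
  have := ind (ext (-1) d); rewrite sum_ext -hd scaleN1r addNr => /(_ erefl ord0).
  by rewrite /ext unlift_none => /eqP; rewrite oppr_eq0 oner_eq0.
rewrite /= big_ord_recl => hc.
have c0 : c ord0 = 0.
  case: (eqVneq (c ord0) 0) => // c0_nz; case: a_out.
  exists (fun i => - (c ord0)^-1 * c (lift ord0 i)); apply: (scalerI c0_nz).
  have /eqP := hc; rewrite addr_eq0 => /eqP ->; rewrite scaler_sumr -sumrN.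
  by apply: eq_bigr => i _; rewrite scalerA mulrA mulrN mulfV // mulN1r scaleNr.
move: hc; rewrite c0 scale0r add0r => /ind_s hs i.
by case: (unliftP ord0 i) => [j ->|->].
Qed.

Lemma lin_indep_catP s t : lin_indep (s ++ t) <->
  [/\ lin_indep s, lin_indep t & forall y, kspan s y -> kspan t y -> y = 0].
Proof.
elim: s => [|a s IH] /=.
  by split=> [ht|[]//]; split=> // [c _ []|y /kspan_nil].
split=> [/lin_indep_cons[/IH[ind_s ind_t st] a_out]|].
  split=> // [|y /kspan_cons[c [x [hx ->]]] hy].
    apply/lin_indep_cons; split=> // ha; apply: a_out.
    by apply: kspan_subset ha => x; rewrite mem_cat => ->.
  case: (eqVneq c 0) => [c0 | c_nz].
    by rewrite c0 scale0r add0r in hy *; apply: st.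
  case: a_out; have -> : a = - (c^-1 *: x) + c^-1 *: (c *: a + x).
    by rewrite scalerDr scalerA mulVf // scale1r addrC addrK.
  apply/kspan_cat; exists (- (c^-1 *: x)), (c^-1 *: (c *: a + x)).
  by split=> //; [apply/kspanN/kspanZ | apply: kspanZ].
case=> /lin_indep_cons[ind_s a_out] ind_t ast.
apply/lin_indep_cons; split.
  apply/IH; split=> // y hy; apply: ast.
  by apply/kspan_cons; exists 0, y; rewrite scale0r add0r.
case/kspan_cat=> y [z [hy hz eq_a]]; apply: a_out.
suff z0 : z = 0 by rewrite eq_a z0 addr0.
apply: ast => //; apply/kspan_cons; exists 1, (- y).
by rewrite eq_a scale1r [y + z]addrC addrK; split=> //; apply: kspanN.
Qed.

Lemma lin_indep_size_leq t s :
  lin_indep t -> (forall x, x \in t -> kspan s x) -> (size t <= size s)%N.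
Proof.
move=> ind_t t_s.
have [C hC] : exists C : 'I_(size t) -> 'I_(size s) -> k,
    forall j : 'I_(size t), t`_j = \sum_(i < size s) C j i *: s`_i.
  by apply: (fin_all_exists (fun j : 'I__ => t_s _ (mem_nth 0 (ltn_ord j)))).
pose M : 'M[k]_(size t, size s) := \matrix_(j, i) C j i.
suff /eqP <- : row_free M by apply: rank_leq_col.
rewrite -kermx_eq0; apply/rowV0P => r /sub_kermxP rM0; apply/rowP => j.
rewrite mxE; apply: (ind_t (fun j => r 0 j)).
transitivity (\sum_(i < size s) (r *m M) 0 i *: s`_i).
  under eq_bigr do rewrite hC scaler_sumr.
  rewrite exchange_big; apply: eq_bigr => i _; rewrite mxE scaler_suml.
  by apply: eq_bigr => l _; rewrite mxE scalerA.
by rewrite rM0 big1 // => i _; rewrite mxE scale0r.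
Qed.

Lemma lin_indep_size_ltn b s x : lin_indep b -> (forall y, y \in b -> kspan s y) ->
  kspan s x -> ~ kspan b x -> (size b < size s)%N.
Proof.
move=> ind_b b_s s_x b_x; apply: (lin_indep_size_leq (t := x :: b)).
  exact/lin_indep_cons.
by move=> y; rewrite in_cons => /orP[/eqP->|/b_s].
Qed.

Lemma lin_indep_extend (P : U -> Prop) s b :
  subspace P -> (forall x, P x -> kspan s x) ->
  lin_indep b -> (forall x, x \in b -> P x) -> exists c, is_basis P (c ++ b).
Proof.
move=> sP P_s; have [n] := ubnP (size s - size b); elim: n b => // n IH b.
move=> lt_n ind_b b_P; case: (classic (forall x, P x -> kspan b x)) => [P_b|].
  by exists [::]; split=> // x; split=> [/P_b|]; last exact: kspan_minimal.
case/not_all_ex_not=> x nPx; have [Px b_x] := imply_to_and _ _ nPx.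
have ind_xb : lin_indep (x :: b) by apply/lin_indep_cons.
have lt_b : (size b < size s)%N.
  by apply: lin_indep_size_ltn (P_s _ Px) b_x => // y /b_P/P_s.
have [|||c basis_c] := IH (x :: b) => //.
- by rewrite /= subnS prednK ?subn_gt0 // -ltnS.
- by move=> y; rewrite in_cons => /orP[/eqP->|/b_P].
by exists (rcons c x); rewrite cat_rcons.
Qed.

Lemma subspace_basis (P : U -> Prop) s :
  subspace P -> (forall x, P x -> kspan s x) -> exists b, is_basis P b.
Proof.
move=> sP P_s; have [||c] := lin_indep_extend sP P_s (b := [::]) => //.
  by move=> c _ [].
by rewrite cats0; exists c.
Qed.

Lemma kspan_basis s : exists b, is_basis (kspan s) b.
Proof. exact: subspace_basis (kspan_subspace s) (fun x hx => hx). Qed.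

End Span.

Section LinearImage.
Variables (k : fieldType) (U V : lmodType k) (f : {linear U -> V}).
Implicit Types (s : seq U) (x : U) (y : V).

Lemma subspace_preim (P : V -> Prop) : subspace P -> subspace (fun x => P (f x)).
Proof.
case=> P0 PD PZ; split; first by rewrite linear0.
  by move=> x1 x2 h1 h2; rewrite linearD; apply: PD.
by move=> c x hx; rewrite linearZ; apply: PZ.
Qed.

Lemma kspan_map s y : kspan (map f s) y <-> exists2 x, kspan s x & y = f x.
Proof.
split=> [|[x hx ->]]; last first.
  apply: kspan_minimal (subspace_preim (kspan_subspace _)) _ _ hx.
  by move=> z hz; apply/kspan_mem/map_f.
apply: (@kspan_minimal _ _ (fun y => exists2 x, kspan s x & y = f x)).
  split; first by exists 0; [apply: kspan0 | rewrite linear0].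
    move=> _ _ [x1 h1 ->] [x2 h2 ->].
    by exists (x1 + x2); [apply: kspanD | rewrite linearD].
  by move=> c _ [x hx ->]; exists (c *: x); [apply: kspanZ | rewrite linearZ].
by move=> _ /mapP[x hx ->]; exists x => //; apply: kspan_mem.
Qed.

Lemma lin_indep_map s : lin_indep s ->
  (forall x, kspan s x -> f x = 0 -> x = 0) -> lin_indep (map f s).
Proof.
elim: s => [|a s IH] /=; first by move=> _ _ c _ [].
case/lin_indep_cons=> ind_s a_s f_inj; apply/lin_indep_cons; split.
  apply: IH => // x hx; apply: f_inj; apply/kspan_cons.
  by exists 0, x; rewrite scale0r add0r.
case/kspan_map=> x hx fa; apply: a_s.
suff : a - x = 0 by move/eqP; rewrite subr_eq0 => /eqP->.
apply: f_inj; last by rewrite linearB fa subrr.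
by apply/kspan_cons; exists 1, (- x); rewrite scale1r; split=> //; apply: kspanN.
Qed.

Lemma lin_indep_map_inj s : injective f -> lin_indep s -> lin_indep (map f s).
Proof.
move=> f_inj ind_s; apply: lin_indep_map => // x _ fx0.
by apply: f_inj; rewrite fx0 linear0.
Qed.

Lemma size_sum_image v w b w' : lin_indep v -> lin_indep w ->
  is_basis (fun x => kspan v x /\ kspan w (f x)) b ->
  is_basis (kspan (w ++ map f v)) w' ->
  (size v + size w <= size b + size w')%N.
Proof.
move=> ind_v ind_w [ind_b bE] [ind_w' w'E].
have [c [ind_cb cbE]] : exists c, is_basis (kspan v) (c ++ b).
  apply: lin_indep_extend (kspan_subspace v) (fun x hx => hx) ind_b _.
  by move=> x /kspan_mem/bE[].
have [ind_c _ c_b] := iffLR (lin_indep_catP _ _) ind_cb.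
have c_v x : kspan c x -> kspan v x.
  by move=> hx; apply/cbE; apply: kspan_subset hx => z; rewrite mem_cat => ->.
have c_P x : kspan c x -> kspan w (f x) -> x = 0.
  by move=> hx hfx; apply: c_b => //; apply/bE; split=> //; apply: c_v.
have le_v : (size v <= size c + size b)%N.
  by rewrite -size_cat; apply: lin_indep_size_leq => // x /kspan_mem/cbE.
have ind_wc : lin_indep (w ++ map f c).
  apply/lin_indep_catP; split=> //.
    apply: lin_indep_map => // x hx fx0; apply: c_P => //.
    by rewrite fx0; apply: kspan0.
  by move=> y hy /kspan_map[x hx eq_y]; rewrite eq_y (c_P x hx) ?linear0 -?eq_y.
have : (size (w ++ map f c) <= size w')%N.
  apply: lin_indep_size_leq => // y.
  rewrite mem_cat => /orP[hy|/mapP[x hx ->]]; apply/w'E.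
    by apply: kspan_mem; rewrite mem_cat hy.
  apply: (@kspan_subset _ _ (map f v)) => [z|].
    by rewrite mem_cat => ->; rewrite orbT.
  by apply/kspan_map; exists x => //; apply/c_v/kspan_mem.
rewrite size_cat size_map => le_w'.
apply: leq_trans (leq_add le_v (leqnn _)) _.
by rewrite [(size c + _)%N]addnC -addnA leq_add2l addnC.
Qed.

End LinearImage.

Section Product.
Variables (k : fieldType) (A : algType k).
Implicit Types (s v w h : seq A) (x y z a : A).

Lemma kspan_prodseq_minimal (P : A -> Prop) v w : subspace P ->
  (forall x y, x \in v -> y \in w -> P (x * y)) ->
  forall z, kspan (prodseq v w) z -> P z.
Proof.
move=> sP vw_P; apply: kspan_minimal sP _ => _ /allpairsP[[x y] [hx hy ->]].
exact: vw_P.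
Qed.

Lemma kspan_prodseq_mul v w x y :
  kspan v x -> kspan w y -> kspan (prodseq v w) (x * y).
Proof.
move=> hx hy; move: x hx.
apply: (kspan_minimal (subspace_preim (y \o* idfun) (kspan_subspace _))).
move=> x hx /=; move: y hy.
apply: (kspan_minimal (subspace_preim (x \*o idfun) (kspan_subspace _))) => y hy /=.
by apply: kspan_mem; apply/allpairsP; exists (x, y).
Qed.

Definition unital_subalgebra h :=
  kspan h 1 /\ forall x y, kspan h x -> kspan h y -> kspan h (x * y).

Definition lstabilizes h s := forall a x, kspan h a -> kspan s x -> kspan s (a * x).

Definition lstab w a := forall y, kspan w y -> kspan w (a * y).

Lemma subspace_lstab w : subspace (lstab w).
Proof.
split=> [y _|a1 a2 h1 h2 y hy|c a ha y hy]; first by rewrite mul0r; apply: kspan0.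
  by rewrite mulrDl; apply: kspanD; [apply: h1 | apply: h2].
by rewrite -scalerAl; apply/kspanZ/ha.
Qed.

Section Reduction.
Variables (v w : seq A).
Hypotheses (ind_v : lin_indep v) (ind_w : lin_indep w).
Hypotheses (v1 : kspan v 1) (w1 : kspan w 1).
Hypothesis v_comm : forall x y, kspan v x -> kspan v y -> x * y = y * x.

Lemma kneser_reduction x0 X : kspan v x0 -> kspan w X -> ~ kspan w (x0 * X) ->
  exists b w', [/\ (size b < size v)%N, lin_indep b /\ lin_indep w',
    kspan b 1 /\ kspan w' 1, forall x, kspan b x -> kspan v x &
    (size v + size w <= size b + size w')%N /\
    forall z, kspan (prodseq b w') z -> kspan (prodseq v w) z].
Proof.
move=> v_x0 w_X w_x0X; pose P x := kspan v x /\ kspan w ((X \o* idfun) x).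
have sP : subspace P.
  exact: subspaceI (kspan_subspace v) (subspace_preim _ (kspan_subspace w)).
have [b [ind_b bE]] := subspace_basis sP (fun x hx => hx.1).
have [w' [ind_w' w'E]] := kspan_basis (w ++ map (X \o* idfun) v).
have b_v x : kspan b x -> kspan v x by move/bE=> [].
exists b, w'; split=> //.
- apply: lin_indep_size_ltn v_x0 _ => // [x /kspan_mem/b_v //|/bE[]//].
- split; first by apply/bE; split=> //=; rewrite mul1r.
  by apply/w'E; apply: kspan_subset w1 => x; rewrite mem_cat => ->.
split; first exact: size_sum_image ind_v ind_w (conj ind_b bE) (conj ind_w' w'E).
apply: kspan_prodseq_minimal (kspan_subspace _) _ => x y /kspan_mem/bE[v_x w_xX].
move=> /kspan_mem/w'E/kspan_cat[p [_ [w_p /kspan_map[z v_z ->] ->]]] /=.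
rewrite mulrDr mulrA (v_comm v_x v_z) -mulrA.
by apply: kspanD; apply: kspan_prodseq_mul.
Qed.

End Reduction.

End Product.

Section KneserBound.
Variables (k : fieldType) (A : unitAlgType k).
Implicit Types (s v w h : seq A) (x y u : A).

Definition kneser_bound v w := exists s h,
  [/\ lin_indep s /\ (forall x, kspan s x -> kspan (prodseq v w) x),
      exists x, kspan s x /\ x \is a GRing.unit,
      lin_indep h /\ unital_subalgebra h,
      lstabilizes h s &
      (size v + size w <= size s + size h)%N].

Lemma kneser_bound_mono v w b w' : kneser_bound b w' ->
  (size v + size w <= size b + size w')%N ->
  (forall z, kspan (prodseq b w') z -> kspan (prodseq v w) z) ->
  kneser_bound v w.
Proof.
move=> [s [h [[ind_s s_bw'] s_unit h_alg h_s le_bw']]] le_vw bw'_vw.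
exists s, h; split=> //; last exact: leq_trans le_vw le_bw'.
by split=> // x /s_bw'/bw'_vw.
Qed.

Lemma kneser_bound_mul_stable v w : lin_indep v -> lin_indep w ->
  kspan v 1 -> kspan w 1 ->
  (forall x y, kspan v x -> kspan w y -> kspan w (x * y)) -> kneser_bound v w.
Proof.
move=> ind_v ind_w v1 w1 vw_w.
have lstab_w a : lstab w a -> kspan w a by move/(_ 1 w1); rewrite mulr1.
have [h [ind_h hE]] := subspace_basis (subspace_lstab w) lstab_w.
have v_h x : kspan v x -> kspan h x by move=> hx; apply/hE => y; apply: vw_w.
exists w, h; split=> //.
- by split=> // x hx; rewrite -[x]mul1r; apply: kspan_prodseq_mul.
- by exists 1; rewrite unitr1.
- split=> //; split; first exact: v_h.
  move=> a b /hE ha /hE hb; apply/hE => y hy.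
  by rewrite -mulrA; apply/ha/hb.
- by move=> a x /hE; apply.
rewrite addnC leq_add2l; apply: lin_indep_size_leq => // x /kspan_mem.
exact: v_h.
Qed.

Lemma kneser_bound_unital v w : lin_indep v -> lin_indep w ->
  kspan v 1 -> kspan w 1 ->
  (forall x y, kspan v x -> kspan v y -> x * y = y * x) -> kneser_bound v w.
Proof.
have [n] := ubnP (size v); elim: n v w => // n IH v w lt_v ind_v ind_w v1 w1 v_comm.
case: (classic (exists x0 X, [/\ kspan v x0, kspan w X & ~ kspan w (x0 * X)])).
  move=> [x0 [X [v_x0 w_X w_x0X]]].
  have [b [w' [lt_b [ind_b ind_w'] [b1 w'1] b_v [le_vw bw'_vw]]]] :=
    kneser_reduction ind_v ind_w v1 w1 v_comm v_x0 w_X w_x0X.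
  apply: kneser_bound_mono le_vw bw'_vw; apply: IH => //.
    exact: leq_trans lt_b lt_v.
  by move=> x y /b_v hx /b_v hy; apply: v_comm.
move=> no_witness; apply: kneser_bound_mul_stable => // x y hx hy.
by apply: NNPP => nxy; apply: no_witness; exists x, y.
Qed.

Lemma kneser_bound_translate v w u u' :
  u \is a GRing.unit -> u' \is a GRing.unit -> kneser_bound v w ->
  kneser_bound (map (u \*o idfun) v) (map (u' \o* idfun) w).
Proof.
move=> uU u'U [s [h [[ind_s s_vw] [x [s_x xU]] [ind_h [h1 h_mul]] h_s le_vw]]].
pose f := u \*o (u' \o* idfun); pose g := u \*o (u^-1 \o* idfun).
have f_inj : injective f by move=> y y' /(mulrI uU)/(mulIr u'U).
have g_inj : injective g.
  by move=> y y' /(mulrI uU)/mulIr; apply; rewrite unitrV.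
exists (map f s), (map g h); split.
- split=> [|_ /kspan_map[y /s_vw vw_y ->]]; first exact: lin_indep_map_inj.
  apply: (kspan_prodseq_minimal (subspace_preim f (kspan_subspace _))) vw_y.
  move=> a b ha hb /=; rewrite !mulrA -mulrA.
  by apply/kspan_mem/allpairsP; exists (u * a, b * u'); split=> //; apply: map_f.
- exists (f x); split; first by apply/kspan_map; exists x.
  by rewrite /= unitrMr // unitrMl.
- split; first exact: lin_indep_map_inj.
  split; first by apply/kspan_map; exists 1; rewrite //= mul1r mulrV.
  move=> _ _ /kspan_map[a ha ->] /kspan_map[b hb ->]; apply/kspan_map.
  by exists (a * b); [apply: h_mul | rewrite /= -!mulrA mulKr].
- move=> _ _ /kspan_map[a ha ->] /kspan_map[y hy ->]; apply/kspan_map.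
  by exists (a * y); [apply: h_s | rewrite /= -!mulrA mulKr].
by rewrite !size_map.
Qed.

Lemma kneser_bound_units v w u u' : lin_indep v -> lin_indep w ->
  (forall x y, kspan v x -> kspan v y -> x * y = y * x) ->
  kspan v u -> u \is a GRing.unit -> kspan w u' -> u' \is a GRing.unit ->
  kneser_bound v w.
Proof.
move=> ind_v ind_w v_comm v_u uU w_u' u'U.
pose v' := map (u^-1 \*o idfun) v; pose w' := map (u'^-1 \o* idfun) w.
have -> : v = map (u \*o idfun) v'.
  by rewrite -map_comp -[LHS]map_id; apply: eq_map => x /=; rewrite mulVKr.
have -> : w = map (u' \o* idfun) w'.
  by rewrite -map_comp -[LHS]map_id; apply: eq_map => x /=; rewrite mulrVK.
have uV_comm x y : kspan v x -> u^-1 * x * (u^-1 * y) = u^-1 * u^-1 * (x * y).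
  by move=> hx; rewrite mulrA -(mulrA _ x) (commrV (v_comm _ _ hx v_u)) !mulrA.
apply: kneser_bound_translate => //; apply: kneser_bound_unital.
- by apply: lin_indep_map_inj => // x y /mulrI; apply; rewrite unitrV.
- by apply: lin_indep_map_inj => // x y /mulIr; apply; rewrite unitrV.
- by apply/kspan_map; exists u; rewrite //= mulVr.
- by apply/kspan_map; exists u'; rewrite //= mulrV.
move=> _ _ /kspan_map[x hx ->] /kspan_map[y hy ->] /=.
by rewrite !uV_comm // v_comm.
Qed.

End KneserBound.

Unset Implicit Arguments.
Set Strict Implicit.

Theorem corollary4p9 (k : fieldType) (A : unitAlgType k)
    (kinf : infinite_type k) (hs : H_s A)
    (v w : seq A) (v_indep : lin_indep v) (w_indep : lin_indep w) :
    (forall x y, kspan v x -> kspan v y -> x * y = y * x) ->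
    (exists x, kspan v x /\ x \is a GRing.unit) ->
    (exists x, kspan w x /\ x \is a GRing.unit) ->
    exists (s h : seq A),
      [/\ lin_indep s /\ (forall x, kspan s x -> kspan (prodseq v w) x),
          (exists x, kspan s x /\ x \is a GRing.unit),
          lin_indep h /\ kspan h 1 /\
            (forall x y, kspan h x -> kspan h y -> kspan h (x * y)),
          (exists d, has_dim (kspan (prodseq v w)) d /\
             (size s <= d)%N /\
             (size v + size w <= size s + size h)%N) &
          forall x, setmul (kspan h) (kspan s) x <-> kspan s x].
Proof.
move=> v_comm [u [v_u uU]] [u' [w_u' u'U]].
have [s [h [[ind_s s_vw] s_unit [ind_h [h1 h_mul]] h_s le_vw]]] :=
  kneser_bound_units v_indep w_indep v_comm v_u uU w_u' u'U.
have [d [ind_d dE]] := kspan_basis (prodseq v w).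
exists s, h; split=> //.
  exists (size d); split; first by exists d.
  by split=> //; apply: lin_indep_size_leq => // x /kspan_mem/s_vw/dE.
move=> x; split=> [[a [y [ha hy ->]]]|hx]; first exact: h_s.
by exists 1, x; rewrite mul1r.
Qed.
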